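(* Let $G$ be a graph, let $G'$ be a 2-connected bipartite subgraph of $G$, and let $B$ be a 2-connected subgraph of $G$ that contains $G'$ as a subgraph. If $B$ is not bipartite, then $B$ contains a bad path for $G'$.
   Context: Since $G'$ is connected and bipartite, its bipartition into two parts is unique. A path $P_{uv}$ in $G$ with endpoints $u,v$ is a bad path for $G'$ if $u,v\in V(G')$, all other vertices of $P_{uv}$ lie in $V(G)\setminus V(G')$, and at least one of the following holds: (a) $u,v$ are in the same part of $G'$ and $P_{uv}$ has odd length (number of edges); (b) $u,v$ are in different parts of $G'$ and $P_{uv}$ has even length. *)

From mathcomp Require Import all_boot.
Set Implicit Arguments. Unset Strict Implicit. Unset Printing Implicit Defensive.

Section Graphs.
Variable T : finType.

Definition simple_graph (e : rel T) : Prop :=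
  (forall x y, e x y = e y x) /\ (forall x, ~~ e x x).

Definition subgraph_of (V1 : {set T}) (E1 : rel T) (V2 : {set T}) (E2 : rel T) : Prop :=
  [/\ V1 \subset V2,
      (forall x y, E1 x y = E1 y x) &
      (forall x y, E1 x y -> [&& E2 x y, x \in V1 & y \in V1])].

Definition restr (V : {set T}) (E : rel T) : rel T :=
  fun x y => [&& E x y, x \in V & y \in V].

Definition connected_graph (V : {set T}) (E : rel T) : Prop :=
  forall x y, x \in V -> y \in V -> connect (restr V E) x y.

Definition two_connected (V : {set T}) (E : rel T) : Prop :=
  [/\ 3 <= #|V|, connected_graph V E &
      forall z, z \in V -> connected_graph (V :\ z) E].

Definition bipartition (V : {set T}) (E : rel T) (c : T -> bool) : Prop :=
  forall x y, x \in V -> y \in V -> E x y -> c x != c y.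

Definition bipartite (V : {set T}) (E : rel T) : Prop :=
  exists c, bipartition V E c.

(* u and v lie in the same part of the (connected, hence uniquely
   bipartitioned) bipartite graph (V,E). *)
Definition same_part (V : {set T}) (E : rel T) (u v : T) : Prop :=
  forall c, bipartition V E c -> c u = c v.

(* A path in (VB,EB): vertex sequence u :: p, pairwise distinct, all vertices
   in VB, consecutive vertices adjacent in EB.  Its length is size p and its
   endpoints are u and last u p. *)
Definition is_path_in (VB : {set T}) (EB : rel T) (u : T) (p : seq T) : Prop :=
  [/\ path EB u p, uniq (u :: p) & all (fun x => x \in VB) (u :: p)].

Definition bad_path (V' : {set T}) (E' : rel T) (u : T) (p : seq T) : Prop :=
  let v := last u p in
  [/\ u \in V', v \in V',
      all (fun x => x \notin V') (behead (belast u p)) &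
      (same_part V' E' u v /\ odd (size p)) \/
      (~ same_part V' E' u v /\ ~~ odd (size p))].

End Graphs.

From mathcomp Require Import all_boot zify.
From Stdlib Require Import Classical ClassicalEpsilon.
Set Implicit Arguments. Unset Strict Implicit. Unset Printing Implicit Defensive.

(* Fix a 2-colouring c of G' and assume B has no bad path.  Then every path of B
   between vertices u, v of G' has length of the parity of c u + c v: cut it at
   its inner vertices in G' into paths that are not bad.  Now take an odd cycle
   of B and a path (a stem) from a vertex x of the cycle to G', otherwise
   disjoint from the cycle.  Since B - x is connected, some path (a detour)
   leaves the cycle at y != x and first meets G' or the stem, avoiding x.  If
   it ends in G' off the stem, the stem, either arc of the cycle from x to y
   and the detour form two paths of B between the same vertices of G' whose
   lengths have different parities.  If it ends on the stem, one of the two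
   arcs closes an odd cycle whose stem is a proper end of the old one.  Hence
   every cycle of B is even, and B is bipartite. *)

Section Sequences.
Variable T : eqType.
Implicit Types (A Z : pred T) (s p q : seq T) (x y : T).

Lemma not_uniq_split s :
  ~~ uniq s -> exists s1 y s2 s3, s = s1 ++ y :: s2 ++ y :: s3.
Proof.
elim: s => [|x s IHs] //=; case xs: (x \in s) => /=.
  by case/splitPr: xs => s2 s3; exists [::], x, s2, s3.
by case/IHs => s1 [y [s2 [s3 ->]]]; exists (x :: s1), y, s2, s3.
Qed.

Lemma split_first A s :
  has A s -> exists s1 y s2, [/\ s = s1 ++ y :: s2, A y & all (predC A) s1].
Proof.
case/split_find => y s1 s2 Ay nAs1.
by exists s1, y, s2; rewrite cat_rcons all_predC.
Qed.

Lemma split_last A s :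
  has A s -> exists s1 y s2, [/\ s = s1 ++ y :: s2, A y & all (predC A) s2].
Proof.
rewrite -has_rev => /split_first [s1 [y [s2 [Es Ay nAs1]]]].
exists (rev s2), y, (rev s1); split; rewrite ?all_rev //.
by rewrite -[s]revK Es rev_cat rev_cons cat_rcons.
Qed.

Lemma mem_belast_last w y p : (w \in y :: p) = (w \in belast y p) || (w == last y p).
Proof. by rewrite lastI mem_rcons inE orbC. Qed.

Lemma last_notin_belast y p : uniq (y :: p) -> last y p \notin belast y p.
Proof. by rewrite lastI rcons_uniq => /andP []. Qed.

Lemma rev_lastI x p : rev (x :: p) = last x p :: rev (belast x p).
Proof. by rewrite lastI rev_rcons. Qed.

Lemma last_rev_belast x p : last (last x p) (rev (belast x p)) = x.
Proof. by case: p => [|a p] //=; rewrite rev_cons last_rcons. Qed.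

Lemma uniq_cat_disjoint s1 s2 :
  uniq s1 -> uniq s2 -> {in s2, forall w, w \notin s1} -> uniq (s1 ++ s2).
Proof. by move=> U1 U2 /hasPn D12; rewrite cat_uniq U1 U2 D12. Qed.

Lemma split_exit_entry A Z a p : A a -> Z (last a p) ->
  exists s1 y q s2, [/\ a :: p = s1 ++ y :: q ++ s2, A y, Z (last y q),
                        all (predC A) q & all (predC Z) (belast y q)].
Proof.
move=> Aa Zl; have /split_first [t1 [z [t2 [Ep Zz nZt1]]]] : has Z (a :: p).
  by apply/hasP; exists (last a p); rewrite ?mem_last.
have /split_last [s1 [y [q [Et Ay nAq]]]] : has A (rcons t1 z).
  apply/hasP; exists a => //; move: Ep; rewrite -cat_rcons.
  by case: (rcons t1 z) (size_rcons t1 z) => // b t _ [-> _]; rewrite mem_head.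
have Lq : last y q = z by rewrite -(last_rcons z t1 z) Et last_cat.
exists s1, y, q, t2; split; rewrite ?Lq //; first by rewrite Ep -cat_rcons Et -catA.
have : rcons (s1 ++ belast y q) z = rcons t1 z by rewrite rcons_cat -{1}Lq -lastI Et.
by move/(@rcons_injl _ z) => Et1; move: nZt1; rewrite -Et1 all_cat => /andP [].
Qed.

Variable r : rel T.

Lemma path_infix x p s1 y q s2 :
  x :: p = s1 ++ y :: q ++ s2 -> path r x p -> path r y q.
Proof.
move=> Ep; rewrite -[path r x p]/(sorted r (x :: p)) Ep sorted_cat_cons.
by rewrite cat_path => /and3P [].
Qed.

End Sequences.

Section Cycles.
Variables (T : eqType) (r : rel T).
Implicit Types (s p : seq T) (x y : T).

Lemma odd_cycle_ucycle s :
  cycle r s -> odd (size s) -> exists2 s', ucycle r s' & odd (size s').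
Proof.
have [n] := ubnP (size s); elim: n s => // n IH s.
have [Us _ Cs odd_s | ] := boolP (uniq s); first by exists s; rewrite // /ucycle Cs.
case/not_uniq_split => s1 [y [s2 [s3 ->]]] size_lt Cs odd_s.
have : cycle r (y :: s2 ++ y :: (s3 ++ s1)) by move: Cs; rewrite cycle_catC /= -catA.
rewrite /= rcons_cat cat_path /= -/(cycle r (y :: s3 ++ s1)) => /andP [C2 /andP [e_y C3]].
have {e_y}C2 : cycle r (y :: s2) by rewrite /= rcons_path C2.
move: size_lt odd_s; rewrite !size_cat /= size_cat /= => size_lt odd_s.
have [odd2 | even2] := boolP (odd (size (y :: s2))).
  by apply: (IH _ _ C2 odd2); rewrite /=; lia.
apply: (IH _ _ C3); first by rewrite /= size_cat; lia.
move: odd_s even2; rewrite /= size_cat !addnS /= !oddD.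
by case: (odd (size s1)); case: (odd (size s2)); case: (odd (size s3)).
Qed.

Hypothesis r_sym : symmetric r.

Lemma rev_path_sym x p : path r (last x p) (rev (belast x p)) = path r x p.
Proof. by rewrite rev_path; apply: eq_path => u v; apply: r_sym. Qed.

Lemma ucycle_arc s x y b : ucycle r s -> odd (size s) -> x \in s -> y \in s -> x != y ->
  exists p, [/\ path r x p, last x p = y, uniq (x :: p), {subset p <= s} & odd (size p) = b].
Proof.
case/andP => Cs Us odd_s xs ys xy; case: (rot_to_arc Us xs ys xy) => i p1 p2 _ _ Es.
have Cx : path r x (p1 ++ y :: rcons p2 x).
  by move: Cs; rewrite -(rot_cycle i) Es /= rcons_cat.
have Ux : uniq (x :: p1 ++ y :: p2) by rewrite -Es rot_uniq.
have sub w : w \in p1 ++ y :: p2 -> w \in s.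
  by rewrite -(mem_rot i s) Es => w_p; rewrite inE w_p orbT.
have odd12 : odd (size p1).+1 != odd (size p2).+1.
  move: odd_s; rewrite -(size_rot i) Es /= size_cat /= addnS !oddS oddD.
  by case: (odd _); case: (odd _).
have [arc1 | arc2] := eqVneq (odd (size p1).+1) b.
  exists (rcons p1 y); split; rewrite ?last_rcons ?size_rcons //.
  - by move: Cx; rewrite cat_path rcons_path /= => /and3P [-> ->].
  - by move: Ux; rewrite -cat_rcons -cat_cons cat_uniq => /andP [].
  - by move=> w; rewrite mem_rcons inE => /orP [/eqP -> | w_p1]; apply: sub;
      rewrite mem_cat ?mem_head ?w_p1 ?orbT.
exists (rev (y :: p2)); split; rewrite ?size_rev.
- rewrite -(last_rcons y p2 x) -(belast_rcons y p2 x) rev_path_sym.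
  by move: Cx; rewrite cat_path => /and3P [].
- by rewrite rev_cons last_rcons.
- move: Ux; rewrite /= mem_rev rev_uniq mem_cat negb_or cat_uniq.
  by case/andP => /andP [_ ->] /and3P [_ _ ->].
- by move=> w; rewrite mem_rev => w_p2; apply: sub; rewrite mem_cat w_p2 orbT.
- by move: odd12 arc2; rewrite /=; case: (odd _); case: (odd _); case: b.
Qed.

End Cycles.

Section Restriction.
Variable T : finType.
Implicit Types (S : {set T}) (e : rel T) (s p : seq T) (x y : T).

Lemma restr_path_mem S e x p : path (restr S e) x p -> {subset p <= S}.
Proof.
elim: p x => //= y p IHp x /andP [/and3P [_ _ yS] /IHp p_S] w.
by rewrite inE => /predU1P [-> | /p_S].
Qed.

Lemma restr_cycle_mem S e s : cycle (restr S e) s -> {subset s <= S}.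
Proof. by case: s => // x p; rewrite (cycle_path x) => /restr_path_mem. Qed.

Lemma restr_path S e x p : path (restr S e) x p -> path e x p.
Proof. by apply: sub_path => u v /and3P []. Qed.

Lemma restr_subset S1 S2 e : S1 \subset S2 -> subrel (restr S1 e) (restr S2 e).
Proof.
by move=> /subsetP sub12 u v /and3P [e_uv uS vS]; apply/and3P; split; rewrite ?sub12.
Qed.

Lemma connect_upath e x y :
  connect e x y -> exists p, [/\ path e x p, last x p = y & uniq (x :: p)].
Proof. by case/connectP => p0 /shortenP [p P U _] ->; exists p. Qed.

End Restriction.

Section Bipartition.
Variable T : finType.
Implicit Types (V : {set T}) (e : rel T) (s p : seq T) (x y : T).

Lemma even_cycles_bipartite V e : connected_graph V e ->
  (forall s, cycle (restr V e) s -> ~~ odd (size s)) -> bipartite V e.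
Proof.
move=> conn even; have [-> | [t tV]] := set_0Vmem V; first by exists xpred0 => x y; rewrite inE.
have walk_parity p1 p2 : path (restr V e) t p1 -> path (restr V e) t p2 ->
    last t p1 = last t p2 -> odd (size p1) = odd (size p2).
  move=> P1 P2 L12; set w := last t p2 in L12.
  have wV : w \in V.
    by have := mem_last t p2; rewrite -/w inE => /predU1P [-> | /(restr_path_mem P2)].
  have [q Pq Lq] := connectP (conn w t wV tV).
  have even_closed p : path (restr V e) t p -> last t p = w -> odd (size p) = odd (size q).
    move=> P Lp; have := even (p ++ q); rewrite (cycle_path t) last_cat Lp -Lq cat_path P Lp Pq.
    by rewrite size_cat oddD => /(_ isT); case: (odd _); case: (odd _).
  by rewrite !even_closed.
pose col w := if excluded_middle_informative
  (exists p, [/\ path (restr V e) t p, last t p = w & odd (size p)]) then true else false.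
have colE p : path (restr V e) t p -> col (last t p) = odd (size p).
  rewrite /col; case: excluded_middle_informative => [[p' [P' L' odd_p']] | no_odd] P.
    by rewrite -(walk_parity p') ?L'.
  by apply/esym/negP => odd_p; apply: no_odd; exists p.
exists col => x y xV yV e_xy; have [p Pp Lp] := connectP (conn t x tV xV).
have := colE (rcons p y); rewrite rcons_path Pp last_rcons size_rcons Lp colE //=.
by rewrite /restr -Lp e_xy xV yV => /(_ isT) ->; case: (odd _).
Qed.

Lemma same_partE V e c u v : connected_graph V e -> bipartition V e c ->
  u \in V -> v \in V -> same_part V e u v <-> c u = c v.
Proof.
move=> conn bip uV vV; split => [/(_ c bip) // | cuv c' bip'].
have agree w p : w \in V -> path (restr V e) w p -> (c w == c' w) = (c (last w p) == c' (last w p)).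
  elim: p w => //= a p IHp w wV /andP [/and3P [e_wa _ aV] Pp]; rewrite -IHp //.
  by move: (bip w a wV aV e_wa) (bip' w a wV aV e_wa); do 2!case: (c _); do 2!case: (c' _).
have [p Pp Lv] := connectP (conn u v uV vV).
by move: (agree u p uV Pp) cuv; rewrite -Lv; do 2!case: (c _); do 2!case: (c' _).
Qed.

End Bipartition.

Section NoBadPath.
Variables (T : finType) (V' VB : {set T}) (E' EB : rel T) (c : T -> bool).
Hypotheses (EB_sym : symmetric EB) (EB_irr : irreflexive EB).
Hypotheses (V'_sub : V' \subset VB) (V'_gt1 : 1 < #|V'|).
Hypotheses (V'_conn : connected_graph V' E') (c_bip : bipartition V' E' c).
Hypothesis VB_conn : connected_graph VB EB.
Hypothesis VB_conn2 : forall x, x \in VB -> connected_graph (VB :\ x) EB.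
Hypothesis no_bad : forall u p, is_path_in VB EB u p -> ~ bad_path V' E' u p.

Local Notation E := (restr VB EB).
Implicit Types (s p r P : seq T) (u w x y : T).

Lemma E_sym : symmetric E.
Proof. by move=> x y; rewrite /restr EB_sym andbA andbAC -andbA. Qed.

Lemma V'_other x : exists2 t, t \in V' & t != x.
Proof.
case/card_gt1P: V'_gt1 => a [b [aV bV ab]].
by have [<- | ax] := eqVneq a x; [exists b; rewrite // eq_sym | exists a].
Qed.

Lemma ucycle_other s x : ucycle E s -> x \in s -> exists2 y, y \in s & y != x.
Proof.
case/andP => Cs Us xs; apply/hasP; apply: contraT => /hasPn all_x.
have : size s <= size [:: x].
  by apply: uniq_leq_size Us _ => w /all_x /negPn; rewrite inE.
by case: s Cs xs {Us all_x} => [|a [|b s]] //=; rewrite /restr EB_irr.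
Qed.

Lemma direct_upath_parity u p : path E u p -> uniq (u :: p) -> u \in V' -> last u p \in V' ->
  {in p, forall w, w \in V' -> w = last u p} -> odd (size p) = (c u != c (last u p)).
Proof.
move=> Pp Up uV lV p_V'; apply/eqP; apply: contraT => mismatch.
case: (no_bad (u := u) (p := p)).
  split => //; first exact: restr_path Pp.
  apply/allP => w; rewrite inE => /predU1P [-> | /(restr_path_mem Pp) //].
  exact: (subsetP V'_sub).
split => //.
  case: p Up p_V' {Pp lV mismatch} => // a p /andP [_ Up] p_V' /=.
  apply/allP => w w_p; apply/negP => /(p_V' w (mem_belast w_p)) /= w_l.
  by move: (last_notin_belast Up); rewrite -w_l w_p.
rewrite (same_partE V'_conn c_bip uV lV); have [eq_c | neq_c] := eqVneq (c u) (c (last u p)).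
  by left; move: mismatch; rewrite eq_c eqxx; case: (odd _).
by right; split; [apply/eqP | move: mismatch; rewrite neq_c; case: (odd _)].
Qed.

Lemma upath_parity u p : path E u p -> uniq (u :: p) -> u \in V' -> last u p \in V' ->
  odd (size p) = (c u != c (last u p)).
Proof.
have [n] := ubnP (size p); elim: n u p => // n IH u p size_p Pp Up uV lV.
have [/hasP [w w_p /andP [wV w_l]] | /hasPn p_V'] :=
  boolP (has [pred w | (w \in V') && (w != last u p)] p); last first.
  apply: direct_upath_parity => // w w_p wV; apply/eqP.
  by move: (p_V' w w_p); rewrite /= wV negbK.
move: size_p Pp Up lV w_l; case/splitPr: w_p => p1 p2 size_p Pp Up lV w_l.
have U1 : uniq (u :: rcons p1 w) by move: Up; rewrite -cat_rcons -cat_cons cat_uniq => /andP [].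
have U2 : uniq (w :: p2) by move: Up; rewrite -cat_cons cat_uniq => /and3P [].
move: Pp size_p lV w_l; rewrite cat_path last_cat /= size_cat /=.
move=> /and3P [P1 e_w P2] size_p lV w_l.
have p2_gt0 : 0 < size p2 by case: p2 {Up U2 size_p P2 lV} w_l; rewrite /= ?eqxx.
have [size1 size2] : size (rcons p1 w) < n /\ size p2 < n.
  by move: size_p p2_gt0; rewrite size_rcons; move: (size p1) (size p2) => a b; lia.
have := IH u (rcons p1 w) size1; rewrite last_rcons rcons_path P1 e_w => /(_ isT U1 uV wV).
rewrite size_rcons -addSnnS oddD (IH w p2 size2 P2 U2 wV lV) => ->.
by case: (c u); case: (c w); case: (c _).
Qed.

Definition stemmed_odd_cycle s x P :=
  [/\ ucycle E s, odd (size s), x \in s, path E x P & uniq (x :: P)] /\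
  {in P, forall w, w \notin s}.

Definition detour s x P y r :=
  [/\ y \in [predD1 s & x], path E y r, uniq (y :: r), {in r, forall w, w \notin s}
    & {in y :: r, forall w, w \in P -> w = last y r}].

Lemma detour_exists s x P : stemmed_odd_cycle s x P ->
  exists y r, detour s x P y r /\ (last y r \in V') || (last y r \in P).
Proof.
move=> [[Us _ xs _ _] _]; have s_VB := restr_cycle_mem (ucycle_cycle Us).
have [y0 y0s y0x] := ucycle_other Us xs.
have [t tV tx] := V'_other x.
have [p [Pp Lp Up]] :
    exists p, [/\ path (restr (VB :\ x) EB) y0 p, last y0 p = t & uniq (y0 :: p)].
  apply/connect_upath/VB_conn2; rewrite ?in_setD1 ?y0x ?tx /=; try exact: s_VB.
  exact: (subsetP V'_sub).
have [s1 [y [r [s2 [Ep y_sx Zl r_sx r_Z]]]]] :=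
  @split_exit_entry _ [predD1 s & x] [predU V' & P] y0 p
    (introT andP (conj y0x y0s)) (introT orP (or_introl (etrans (f_equal _ Lp) tV))).
have r_VBx : {subset y :: r <= VB :\ x}.
  move=> w w_r; have : w \in y0 :: p by rewrite Ep -cat_cons !mem_cat w_r orbT.
  by rewrite inE => /predU1P [-> | /(restr_path_mem Pp) //]; rewrite in_setD1 y0x s_VB.
exists y, r; split => //; split => //.
- exact: sub_path (restr_subset (subD1set VB x)) _ _ (path_infix Ep Pp).
- by move: Up; rewrite Ep cat_uniq -cat_cons cat_uniq => /and3P [_ _ /and3P []].
- move=> w w_r; have := allP r_sx w w_r; rewrite /= negb_and negbK => /orP [/eqP wx | //].
  by have := r_VBx w; rewrite inE w_r orbT in_setD1 wx eqxx => /(_ isT).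
- move=> w; rewrite mem_belast_last => /orP [w_b w_P | /eqP //].
  by have := allP r_Z w w_b; rewrite /= w_P orbT.
Qed.

Lemma reroute_stem s x P y r : stemmed_odd_cycle s x P -> detour s x P y r ->
  last y r \in P -> exists s' P',
    [/\ stemmed_odd_cycle s' (last y r) P', last (last y r) P' = last x P & size P' < size P].
Proof.
set z := last y r; move=> [[Us odd_s xs PP UP] P_s] [y_sx Pr Ur r_s r_P] zP.
move: y_sx; rewrite inE => /andP [yx ys]; rewrite eq_sym in yx.
have x_r : x \notin r := contraL (@r_s x) xs.
have zr : z \in r.
  by move: (mem_last y r); rewrite -/z inE => /predU1P [zy | //]; move: (P_s z zP); rewrite zy ys.
have [P1 [P2 EP]] : exists P1 P2, P = P1 ++ z :: P2 by case/splitPr: zP => P1 P2; exists P1, P2.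
subst P; move: PP UP; rewrite cat_path => /and3P [PP1 e_z PP2].
rewrite /= mem_cat negb_or cat_uniq => /andP [/andP [x_P1 x_P2] /and3P [UP1 P1_P2 UP2]].
have [q [Pq Lq /andP [x_q Uq] q_s odd_q]] :=
  ucycle_arc E_sym (odd (size r + size P1)) Us odd_s xs ys yx.
have q_P w : w \in q -> w \notin P1 ++ z :: P2 by move/q_s; apply: contraL; apply: P_s.
have r_q w : w \in r -> w \notin q by move/r_s; apply: contra; apply: q_s.
have r_P12 w : w \in r -> w \notin P1 ++ P2.
  move=> w_r; rewrite mem_cat; apply/negP => w_P12.
  have w_z : w = z by apply: r_P; rewrite ?inE ?w_r ?orbT // mem_cat inE orbCA w_P12 orbT.
  by move: P1_P2 UP2; rewrite /= -w_z; case/orP: w_P12 => ->; rewrite ?andbF.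
exists (x :: q ++ r ++ rev P1), P2; split; last first.
- by rewrite size_cat /= addnS ltnS leq_addl.
- by rewrite last_cat.
split; first split => //.
- apply/andP; split.
    rewrite /= rcons_cat rcons_cat -rev_cons cat_path Pq Lq cat_path Pr -/z /=.
    have := rev_path_sym E_sym x (rcons P1 z).
    by rewrite last_rcons belast_rcons rcons_path PP1 e_z => ->.
  rewrite -cat_cons; apply: uniq_cat_disjoint; rewrite /= ?x_q //.
    apply: uniq_cat_disjoint; rewrite ?rev_uniq //; first by case/andP: Ur.
    move=> w; rewrite mem_rev => w_P1; apply: contra (r_P12 w) _.
    by rewrite negbK mem_cat w_P1.
  move=> w; rewrite mem_cat mem_rev inE negb_or => /orP [w_r | w_P1].
    by rewrite r_q // andbT; apply: contraNneq x_r => <-.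
  rewrite (contraL (q_P w)) ?mem_cat ?w_P1 // andbT.
  by apply: contraNneq x_P1 => <-.
- by rewrite /= !size_cat size_rev oddD odd_q !oddD; case: (odd _); case: (odd _).
- by rewrite inE !mem_cat zr /= !orbT.
move=> w w_P2; apply/negP; rewrite inE !mem_cat mem_rev => /or4P [/eqP wx | w_q | w_r | w_P1].
- by move: x_P2; rewrite -wx inE w_P2 orbT.
- by move: (q_P w w_q); rewrite mem_cat inE w_P2 !orbT.
- by move: (r_P12 w w_r); rewrite mem_cat w_P2 orbT.
- by move: (hasPn P1_P2 w); rewrite inE w_P2 orbT w_P1 => /(_ isT).
Qed.

Lemma no_detour_to_V' s x P y r : stemmed_odd_cycle s x P -> detour s x P y r ->
  last x P \in V' -> last y r \in V' -> last y r \notin P -> False.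
Proof.
move=> [[Us odd_s xs PP UP] P_s] [y_sx Pr Ur r_s r_P] lV zV zNP.
set z := last y r in r_P zV zNP *.
move: y_sx; rewrite inE => /andP [yx ys]; rewrite eq_sym in yx.
have x_r : x \notin r := contraL (@r_s x) xs.
have arc_parity q : path E x q -> last x q = y -> uniq (x :: q) -> {subset q <= s} ->
    odd (size P + size q + size r) = (c (last x P) != c z).
  move=> Pq Lq /andP [x_q Uq] q_s.
  have := upath_parity (u := last x P) (p := rev (belast x P) ++ q ++ r).
  rewrite !last_cat last_rev_belast Lq -/z !size_cat size_rev size_belast addnA; apply => //.
    by rewrite cat_path (rev_path_sym E_sym) PP last_rev_belast cat_path Pq Lq.
  rewrite -cat_cons -rev_lastI; apply: uniq_cat_disjoint; rewrite ?rev_uniq //.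
    apply: uniq_cat_disjoint => [|| w w_r]; [by [] | by case/andP: Ur |].
    exact: contra (@q_s w) (r_s w w_r).
  move=> w; rewrite mem_cat mem_rev inE negb_or => /orP [w_q | w_r].
    by rewrite (memPn x_q) //; apply: contraL (q_s w w_q); apply: P_s.
  rewrite (memPn x_r) //; apply: contraNN zNP => w_P.
  by rewrite -(r_P w) // inE w_r orbT.
have [q1 [P1 L1 U1 s1 odd1]] := ucycle_arc E_sym true Us odd_s xs ys yx.
have [q2 [P2 L2 U2 s2 odd2]] := ucycle_arc E_sym false Us odd_s xs ys yx.
have := arc_parity q1 P1 L1 U1 s1; rewrite -(arc_parity q2 P2 L2 U2 s2).
by rewrite -!addnA !oddD odd1 odd2; case: (odd _); case: (odd _).
Qed.

Lemma no_stemmed_odd_cycle s x P : stemmed_odd_cycle s x P -> last x P \in V' -> False.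
Proof.
have [n] := ubnP (size P); elim: n s x P => // n IH s x P size_P stem lV.
have [y [r [det end_r]]] := detour_exists stem.
have [zP | zNP] := boolP (last y r \in P).
  have [s' [P' [stem' L' size']]] := reroute_stem stem det zP.
  by apply: (IH s' _ P' _ stem'); rewrite ?L' // -ltnS (leq_ltn_trans size' size_P).
by apply: (no_detour_to_V' stem det lV _ zNP); rewrite (negPf zNP) orbF in end_r.
Qed.

Lemma ucycle_even s : ucycle E s -> ~~ odd (size s).
Proof.
move=> Us; apply/negP => odd_s.
have [x0 x0s] : exists x0, x0 \in s by case: s odd_s {Us} => // a s _; exists a; rewrite mem_head.
have [t tV _] := V'_other x0.
have s_VB := restr_cycle_mem (ucycle_cycle Us).
have [p [Pp Lp Up]] := connect_upath (VB_conn (s_VB x0 x0s) (subsetP V'_sub t tV)).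
have [s1 [x [P [s2 [Ep xs lV /allP P_s _]]]]] :=
  @split_exit_entry _ (mem s) (mem V') x0 p x0s (etrans (f_equal _ Lp) tV).
apply: (@no_stemmed_odd_cycle s x P) lV; split => //; split => //.
  exact: path_infix Ep Pp.
by move: Up; rewrite Ep cat_uniq -cat_cons cat_uniq => /and3P [_ _ /and3P []].
Qed.

Lemma VB_bipartite : bipartite VB EB.
Proof.
apply: even_cycles_bipartite VB_conn _ => s Cs; apply/negP => odd_s.
have [s' Us' odd_s'] := odd_cycle_ucycle Cs odd_s.
by move: (ucycle_even Us'); rewrite odd_s'.
Qed.

End NoBadPath.

Theorem lemma3p5 (T : finType) (e : rel T)
    (V' : {set T}) (E' : rel T) (VB : {set T}) (EB : rel T) :
  simple_graph e ->
  subgraph_of V' E' [set: T] e -> two_connected V' E' -> bipartite V' E' ->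
  subgraph_of VB EB [set: T] e -> two_connected VB EB ->
  subgraph_of V' E' VB EB ->
  ~ bipartite VB EB ->
  exists (u : T) (p : seq T), is_path_in VB EB u p /\ bad_path V' E' u p.
Proof.
move=> [_ e_irr] _ [V'_gt2 V'_conn _] [c c_bip] [_ EB_sym EB_e] [_ VB_conn VB_conn2].
move=> [V'_sub _ _] not_bip; apply: NNPP => no_bad; apply: not_bip.
apply: (@VB_bipartite _ V' VB E' EB c) => //.
- by move=> x; apply/negP => /EB_e /andP [e_xx _]; move: (e_irr x); rewrite e_xx.
- exact: ltnW.
- by move=> u p path_p bad_p; apply: no_bad; exists u, p.
Qed.
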